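(* Let $F\in[0,1]$ and $0\le p\le F$, and let $F'_{\max}(p,F)=\max\{F'_{00}(\rho_1\otimes\rho_2):\rho_1,\rho_2\in S_{p,F}\}$. Then $$F'_{\max}(p,F)=1-2p(1-F).$$ Moreover (for $p<1$), with $\tilde F=(F-p)/(1-p)$, $|\psi\rangle=\sqrt{\tilde F}|\Psi_{00}\rangle+\sqrt{1-\tilde F}|\Psi_{11}\rangle$ and $\rho_{\mathrm{opt}}=p|\Psi_{00}\rangle\langle\Psi_{00}|+(1-p)|\psi\rangle\langle\psi|$, one has $\rho_{\mathrm{opt}}\in S_{p,F}$ and $F'_{00}(\rho_{\mathrm{opt}}\otimes\rho_{\mathrm{opt}})=F'_{\max}(p,F)$.
   Context: For a pair of qubit registers $(R,T)$, $|\Psi_{ij}\rangle_{RT}=(I_R\otimes (X^iZ^j)_T)\tfrac1{\sqrt2}(|00\rangle+|11\rangle)_{RT}$, $i,j\in\{0,1\}$ ($X,Z$ Pauli matrices). $S_{p,F}$ is the set of two-qubit density operators $\rho$ such that $\rho=p|\Psi_{00}\rangle\langle\Psi_{00}|+(1-p)\sigma$ for some density operator $\sigma$ and $\langle\Psi_{00}|\rho|\Psi_{00}\rangle=F$. Postselected swap: $\rho_1$ acts on registers $(A_1,B_1)$ and $\rho_2$ on $(A_2,B_2)$ (Bell states of each $\rho_k$, including $|\psi\rangle$ above, are taken in the ordering $(A_k,B_k)$); a Bell-state measurement on $(A_1,A_2)$ gives outcome $ij$ with probability $p'_{ij}(\rho_1\otimes\rho_2)=\mathrm{Tr}[|\Psi_{ij}\rangle\langle\Psi_{ij}|_{A_1A_2}\rho_1\otimes\rho_2]$,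 and the postselected end-to-end fidelity (after the Pauli correction $Z^jX^i$ on $B_2$) is $F'_{ij}(\rho_1\otimes\rho_2)=\frac{1}{p'_{ij}}\mathrm{Tr}[|\Psi_{ij}\rangle\langle\Psi_{ij}|_{B_1B_2}|\Psi_{ij}\rangle\langle\Psi_{ij}|_{A_1A_2}\rho_1\otimes\rho_2]$. *)

(* Complex scalars: an arbitrary numClosedFieldType C
   (e.g. complex R for a real closed field R; the complex numbers). *)
From HB Require Import structures.
From mathcomp Require Import all_boot all_order all_algebra.
Set Implicit Arguments.
Unset Strict Implicit.
Unset Printing Implicit Defensive.
Import Order.TTheory GRing.Theory Num.Theory.
Local Open Scope ring_scope.

Definition bitn (k j : nat) : nat := (k %/ 2 ^ j) %% 2.

Section Qubits.
Variable C : numClosedFieldType.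

Definition dag m n (M : 'M[C]_(m, n)) : 'M[C]_(n, m) := map_mx Num.conj (trmx M).

Definition PauliX : 'M[C]_2 := \matrix_(i, j) (i != j)%:R.
Definition PauliZ : 'M[C]_2 := \matrix_(i, j) (if i == j then (-1) ^+ (i : nat) else 0).

(* Two qubits (X,Y): basis index x : 'I_4 with x = 2*(value of X) + (value of Y).
   Kronecker product A (on X) (x) B (on Y). *)
Definition kron2 (A B : 'M[C]_2) : 'M[C]_4 :=
  \matrix_(x, y) (A (inord (bitn x 1)) (inord (bitn y 1)) *
                  B (inord (bitn x 0)) (inord (bitn y 0))).

(* (|00> + |11>)/sqrt 2 *)
Definition phiplus : 'cV[C]_4 :=
  \col_x (if bitn x 1 == bitn x 0 then (sqrtC 2)^-1 else 0).

Definition Bell (i j : bool) : 'cV[C]_4 :=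
  kron2 1%:M (PauliX ^+ i *m PauliZ ^+ j) *m phiplus.

Definition proj n (v : 'cV[C]_n) : 'M[C]_n := v *m dag v.

Definition density n (rho : 'M[C]_n) : Prop :=
  dag rho = rho /\ (forall v : 'cV[C]_n, 0 <= (dag v *m rho *m v) 0 0) /\ \tr rho = 1.

Definition S_pF (p F : C) (rho : 'M[C]_4) : Prop :=
  density rho /\
  (exists sigma : 'M[C]_4, density sigma /\
      rho = p *: proj (Bell false false) + (1 - p) *: sigma) /\
  (dag (Bell false false) *m rho *m Bell false false) 0 0 = F.

(* Four qubits ordered (A1,B1,A2,B2): index x : 'I_16 with
   A1 = bit 3, B1 = bit 2, A2 = bit 1, B2 = bit 0. *)
Definition sub2 (x : nat) (a b : nat) : 'I_4 := inord (2 * bitn x a + bitn x b).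

(* rho1 on (A1,B1) tensor rho2 on (A2,B2) *)
Definition tens (rho1 rho2 : 'M[C]_4) : 'M[C]_16 :=
  \matrix_(x, y) (rho1 (sub2 x 3 2) (sub2 y 3 2) * rho2 (sub2 x 1 0) (sub2 y 1 0)).

(* two-qubit operator P acting on (A1,A2), identity on B1,B2 *)
Definition onA (P : 'M[C]_4) : 'M[C]_16 :=
  \matrix_(x, y) (P (sub2 x 3 1) (sub2 y 3 1) *
                  ((bitn x 2 == bitn y 2) && (bitn x 0 == bitn y 0))%:R).

(* two-qubit operator P acting on (B1,B2), identity on A1,A2 *)
Definition onB (P : 'M[C]_4) : 'M[C]_16 :=
  \matrix_(x, y) (P (sub2 x 2 0) (sub2 y 2 0) *
                  ((bitn x 3 == bitn y 3) && (bitn x 1 == bitn y 1))%:R).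

Definition pswap (i j : bool) (Om : 'M[C]_16) : C :=
  \tr (onA (proj (Bell i j)) *m Om).

Definition Fswap (i j : bool) (Om : 'M[C]_16) : C :=
  (pswap i j Om)^-1 * \tr (onB (proj (Bell i j)) *m onA (proj (Bell i j)) *m Om).

(* v is the maximum of F'_00(rho1 (x) rho2) over rho1, rho2 in S_{p,F}
   (over the pairs for which the outcome 00 has nonzero probability) *)
Definition is_Fmax (p F v : C) : Prop :=
  (exists rho1 rho2, S_pF p F rho1 /\ S_pF p F rho2 /\
     0 < pswap false false (tens rho1 rho2) /\
     Fswap false false (tens rho1 rho2) = v) /\
  (forall rho1 rho2, S_pF p F rho1 -> S_pF p F rho2 ->
     0 < pswap false false (tens rho1 rho2) ->
     Fswap false false (tens rho1 rho2) <= v).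

Definition psi_opt (p F : C) : 'cV[C]_4 :=
  let Ft := (F - p) / (1 - p) in
  sqrtC Ft *: Bell false false + sqrtC (1 - Ft) *: Bell true true.

Definition rho_opt (p F : C) : 'M[C]_4 :=
  p *: proj (Bell false false) + (1 - p) *: proj (psi_opt p F).

End Qubits.

From HB Require Import structures.
From mathcomp Require Import all_boot all_order all_algebra.
From mathcomp Require Import sesquilinear spectral ring.
Import Order.TTheory GRing.Theory Num.Theory.
Set Implicit Arguments.
Unset Strict Implicit.
Unset Printing Implicit Defensive.
Local Open Scope ring_scope.

(* Write rho_k = p Phi + (1 - p) sigma_k with Phi = |Psi_00><Psi_00|, and let
   rho' be the reduced state of rho on the A register.  For a product input,
   p'_00 = D / 2 and F'_00 = N / (2 D) with N = Tr(rho1 rho2^T) and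
   D = Tr(rho1' rho2'^T).  Both are bilinear in (rho1, rho2), so F'_00 is a
   rational function of p, F, n = Tr(sigma1 sigma2^T) and
   d = Tr(sigma1' sigma2'^T).  For positive semidefinite sigma_k,
   n <= Tr sigma1 Tr sigma2 = 1 by Cauchy-Schwarz, and n <= 2 d because
   |tr K|^2 <= 2 |K|^2 for 2x2 matrices K; both bounds are checked on rank-one
   matrices and extended by the spectral theorem.  For f = 1 - 2p(1 - F) they
   make 2 f D - N = (1 - p)^2 ((1 - f)(1 - n) + f (2 d - n)) nonnegative.  The
   state rho_opt has n = 1 and d = 1/2 and attains the bound. *)

Lemma idx2_subproof (a b : 'I_2) : (2 * a + b < 4)%N.
Proof. by case: a b => [[|[|//]] ?] [[|[|//]] ?]. Qed.
Definition idx2 (a b : 'I_2) : 'I_4 := Ordinal (idx2_subproof a b).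

Lemma idx4_subproof (a b c d : 'I_2) : (8 * a + 4 * b + 2 * c + d < 16)%N.
Proof. by case: a b c d => [[|[|//]] ?] [[|[|//]] ?] [[|[|//]] ?] [[|[|//]] ?]. Qed.
Definition idx4 (a b c d : 'I_2) : 'I_16 := Ordinal (idx4_subproof a b c d).

Definition o0 : 'I_2 := @Ordinal 2 0 isT.
Definition o1 : 'I_2 := @Ordinal 2 1 isT.

Lemma ord2P (P : 'I_2 -> Prop) : P o0 -> P o1 -> forall a, P a.
Proof. by move=> P0 P1 [[|[|//]] lt_a_2]; rewrite (bool_irrelevance lt_a_2 isT). Qed.

Lemma bitn_idx2 a b : bitn (idx2 a b) 1 = a /\ bitn (idx2 a b) 0 = b.
Proof. by elim/ord2P: a; elim/ord2P: b. Qed.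

Lemma bitn_idx4 a b c d :
  [/\ bitn (idx4 a b c d) 3 = a, bitn (idx4 a b c d) 2 = b,
      bitn (idx4 a b c d) 1 = c & bitn (idx4 a b c d) 0 = d].
Proof. by elim/ord2P: a; elim/ord2P: b; elim/ord2P: c; elim/ord2P: d. Qed.

Lemma sub2_idx4 a b c d :
  [/\ sub2 (idx4 a b c d) 3 2 = idx2 a b, sub2 (idx4 a b c d) 1 0 = idx2 c d,
      sub2 (idx4 a b c d) 3 1 = idx2 a c & sub2 (idx4 a b c d) 2 0 = idx2 b d].
Proof.
by split; apply: val_inj;
  elim/ord2P: a; elim/ord2P: b; elim/ord2P: c; elim/ord2P: d; rewrite /= inordK.
Qed.

Section Sums.
Variable V : nmodType.

Lemma sum_ord2 (f : 'I_2 -> V) : \sum_i f i = f o0 + f o1.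
Proof. by rewrite !big_ord_recl big_ord0 addr0; congr (f _ + f _); apply: val_inj. Qed.

Lemma sum_idx2 (f : 'I_4 -> V) : \sum_i f i = \sum_a \sum_b f (idx2 a b).
Proof.
rewrite !sum_ord2 !big_ord_recl big_ord0 addr0 !addrA.
by congr (f _ + f _ + f _ + f _); apply: val_inj.
Qed.

Lemma sum_idx4 (f : 'I_16 -> V) :
  \sum_i f i = \sum_a \sum_b \sum_c \sum_d f (idx4 a b c d).
Proof.
rewrite !sum_ord2 !big_ord_recl big_ord0 addr0 !addrA.
by repeat congr (_ + _); congr f; apply: val_inj.
Qed.

End Sums.

Section Adjoint.
Variable C : numClosedFieldType.

Lemma sqrtC_conj (z : C) : 0 <= z -> (sqrtC z)^* = sqrtC z.
Proof. by move=> z_ge0; rewrite geC0_conj ?sqrtC_ge0. Qed.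

Lemma dagK m n (M : 'M[C]_(m, n)) : dag (dag M) = M.
Proof. by apply/matrixP => i j; rewrite !mxE conjCK. Qed.

Lemma dagM m n p (A : 'M[C]_(m, n)) (B : 'M[C]_(n, p)) : dag (A *m B) = dag B *m dag A.
Proof. by rewrite /dag trmx_mul map_mxM. Qed.

Lemma dag_mix n a b (A B : 'M[C]_n) : dag (a *: A + b *: B) = a^* *: dag A + b^* *: dag B.
Proof. by apply/matrixP => i j; rewrite !mxE rmorphD !rmorphM. Qed.

Lemma combmxE m n a b (A B : 'M[C]_(m, n)) i j :
  (a *: A + b *: B) i j = a * A i j + b * B i j.
Proof. by rewrite !mxE. Qed.

Lemma qform_proj n (v w : 'cV[C]_n) :
  (dag w *m proj v *m w) 0 0 = `|(dag v *m w) 0 0| ^+ 2.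
Proof.
rewrite /proj !mulmxA -(mulmxA _ (dag v)) mxE big_ord1 normCK.
by rewrite -[dag w *m v]dagK dagM dagK [dag _ _ _]mxE [_^T _ _]mxE mulrC.
Qed.

Lemma qform_mix n a b (A B : 'M[C]_n) (w : 'cV[C]_n) :
  (dag w *m (a *: A + b *: B) *m w) 0 0 =
  a * (dag w *m A *m w) 0 0 + b * (dag w *m B *m w) 0 0.
Proof. by rewrite mulmxDr mulmxDl -!scalemxAr -!scalemxAl !mxE. Qed.

Lemma density_proj n (v : 'cV[C]_n) : \tr (proj v) = 1 -> density (proj v).
Proof.
move=> tr_v; split; first by rewrite /proj dagM dagK.
by split=> // w; rewrite qform_proj exprn_ge0.
Qed.

Lemma density_mix n p (A B : 'M[C]_n) :
  0 <= p <= 1 -> density A -> density B -> density (p *: A + (1 - p) *: B).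
Proof.
move=> /andP[p_ge0 p_le1] [hermA [posA trA]] [hermB [posB trB]].
split; first by rewrite dag_mix hermA hermB !geC0_conj ?subr_ge0.
split=> [w|]; last by rewrite mxtraceD !mxtraceZ trA trB; ring.
by rewrite qform_mix addr_ge0 ?mulr_ge0 ?subr_ge0.
Qed.

End Adjoint.

Section Overlap.
Local Open Scope sesquilinear_scope.
Variable C : numClosedFieldType.


Definition overlap n (A B : 'M[C]_n) : C := \tr (A *m B^T).

Definition psdmx n (A : 'M[C]_n) : Prop :=
  dag A = A /\ forall v : 'cV[C]_n, 0 <= (dag v *m A *m v) 0 0.

Lemma density_psdmx n (A : 'M[C]_n) : density A -> psdmx A.
Proof. by case=> hermA [posA _]. Qed.

Lemma mxtrace_mulmxE n (A B : 'M[C]_n) : \tr (A *m B) = \sum_i \sum_j A i j * B j i.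
Proof. by apply: eq_bigr => i _; rewrite mxE. Qed.

Lemma overlapE n (A B : 'M[C]_n) : overlap A B = \sum_i \sum_j A i j * B i j.
Proof. by rewrite /overlap mxtrace_mulmxE; do 2![apply: eq_bigr => ? _]; rewrite mxE. Qed.

Lemma overlapC n (A B : 'M[C]_n) : overlap A B = overlap B A.
Proof. by rewrite /overlap -mxtrace_tr trmx_mul trmxK. Qed.

Lemma overlapDl n (A A' B : 'M[C]_n) : overlap (A + A') B = overlap A B + overlap A' B.
Proof. by rewrite /overlap mulmxDl mxtraceD. Qed.

Lemma overlapZl n a (A B : 'M[C]_n) : overlap (a *: A) B = a * overlap A B.
Proof. by rewrite /overlap -scalemxAl mxtraceZ. Qed.

Lemma overlapDr n (A B B' : 'M[C]_n) : overlap A (B + B') = overlap A B + overlap A B'.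
Proof. by rewrite ![overlap A _]overlapC overlapDl. Qed.

Lemma overlapZr n a (A B : 'M[C]_n) : overlap A (a *: B) = a * overlap A B.
Proof. by rewrite ![overlap A _]overlapC overlapZl. Qed.

Lemma overlap_suml n (I : finType) (F : I -> 'M[C]_n) B :
  overlap (\sum_k F k) B = \sum_k overlap (F k) B.
Proof. by rewrite /overlap mulmx_suml raddf_sum. Qed.

Lemma overlap_sumr n (I : finType) A (F : I -> 'M[C]_n) :
  overlap A (\sum_k F k) = \sum_k overlap A (F k).
Proof. by rewrite overlapC overlap_suml; apply: eq_bigr => k _; rewrite overlapC. Qed.

Lemma overlap1mx n (A : 'M[C]_n) : overlap 1%:M A = \tr A.
Proof. by rewrite /overlap mul1mx mxtrace_tr. Qed.

Lemma projE n (v : 'cV[C]_n) i j : proj v i j = v i 0 * (v j 0)^*.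
Proof. by rewrite mxE big_ord1 !mxE. Qed.

Lemma qformE n (v : 'cV[C]_n) (A : 'M[C]_n) :
  (dag v *m A *m v) 0 0 = \sum_i \sum_j (v i 0)^* * A i j * v j 0.
Proof.
rewrite mxE exchange_big; apply: eq_bigr => j _.
by rewrite mxE mulr_suml; apply: eq_bigr => i _; rewrite !mxE.
Qed.

Lemma mxtrace_proj n (v : 'cV[C]_n) : \tr (proj v) = \sum_i `|v i 0| ^+ 2.
Proof. by apply: eq_bigr => i _; rewrite projE normCK. Qed.

Lemma overlap_proj n (u v : 'cV[C]_n) :
  overlap (proj u) (proj v) = `|\sum_i u i 0 * v i 0| ^+ 2.
Proof.
rewrite overlapE normCK rmorph_sum big_distrlr /=.
by do 2![apply: eq_bigr => ? _]; rewrite !projE rmorphM; ring.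
Qed.

Lemma cauchy_schwarz n (u v : 'I_n -> C) :
  `|\sum_i u i * v i| ^+ 2 <= (\sum_i `|u i| ^+ 2) * \sum_i `|v i| ^+ 2.
Proof.
pose B i j := `|u i| ^+ 2 * `|v j| ^+ 2 - (u i * v i) * (u j * v j)^*.
have lagrange : \sum_i \sum_j `|u i * (v j)^* - u j * (v i)^*| ^+ 2 =
                \sum_i \sum_j B i j + \sum_j \sum_i B i j.
  rewrite exchange_big -big_split; apply: eq_bigr => i _.
  rewrite -big_split; apply: eq_bigr => j _.
  by rewrite /B !normCK !rmorphB !rmorphM /= !conjCK; ring.
have sumB : \sum_i \sum_j B i j =
            (\sum_i `|u i| ^+ 2) * (\sum_i `|v i| ^+ 2) - `|\sum_i u i * v i| ^+ 2.
  rewrite normCK rmorph_sum !big_distrlr -sumrB; apply: eq_bigr => i _.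
  by rewrite -sumrB.
have : 0 <= \sum_i \sum_j `|u i * (v j)^* - u j * (v i)^*| ^+ 2.
  by do 2![apply: sumr_ge0 => ? _]; rewrite exprn_ge0.
by rewrite lagrange [X in _ + X]exchange_big /= sumB -mulr2n pmulrn_lge0 // subr_ge0.
Qed.

Lemma mxtrace_sqr_le n (K : 'M[C]_n) :
  `|\tr K| ^+ 2 <= n%:R * \sum_i \sum_j `|K i j| ^+ 2.
Proof.
have := cauchy_schwarz (fun i => K i i) (fun _ => 1).
under eq_bigr do rewrite mulr1.
rewrite normr1 expr1n sumr_const card_ord mulrC.
move=> /le_trans; apply; rewrite ler_wpM2l ?ler0n // ler_sum // => i _.
rewrite (bigD1 i) //= lerDl; apply: sumr_ge0 => j _; exact: exprn_ge0.
Qed.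

Lemma psdmx_sum_proj n (A : 'M[C]_n) :
  psdmx A -> exists W : 'M[C]_n, A = \sum_k proj (col k W).
Proof.
move=> [hermA posA].
have /orthomx_spectralP : A \is normalmx.
  by rewrite qualifE -[map_mx _ _]/(dag A) hermA.
set P := spectralmx A; set X := spectral_diag A.
have P_unitary : P \is unitarymx := spectral_unitarymx A.
rewrite invmx_unitary // => defA.
have diagE i k : (diag_mx X *m P) i k = X 0 i * P i k.
  rewrite mxE (bigD1 i) //= big1 ?addr0 => [|m /negbTE neq_mi]; last first.
    by rewrite mxE eq_sym neq_mi mulr0n mul0r.
  by rewrite mxE eqxx mulr1n.
have X_ge0 k : 0 <= X 0 k.
  have := posA (P^t* *m delta_mx k 0).
  rewrite /dag trmx_mul map_mxM trmxCK defA !mulmxA !mulmxtVK //.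
  rewrite mxE (bigD1 k) //= big1 ?addr0 => [|m /negbTE neq_mk]; last first.
    by rewrite [delta_mx k 0 m 0]mxE neq_mk mulr0.
  rewrite [delta_mx k 0 k 0]mxE !eqxx mulr1 mxE (bigD1 k) //= big1 ?addr0 => [|m /negbTE neq_mk].
    by rewrite !mxE !eqxx conjC1 mul1r mulr1n.
  by rewrite [diag_mx X m k]mxE neq_mk mulr0.
exists (\matrix_(i, k) (sqrtC (X 0 k) * (P k i)^*)).
apply/matrixP => i j; rewrite defA -mulmxA summxE mxE; apply: eq_bigr => k _.
rewrite diagE projE !mxE rmorphM /= sqrtC_conj // conjCK -[X 0 k in LHS]sqrtCK ?X_ge0.
by rewrite expr2; ring.
Qed.

Lemma overlap_le_mxtrace n (A B : 'M[C]_n) :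
  psdmx A -> psdmx B -> overlap A B <= \tr A * \tr B.
Proof.
move=> /psdmx_sum_proj[W ->] /psdmx_sum_proj[Z ->].
rewrite overlap_suml !raddf_sum /= mulr_suml; apply: ler_sum => k _.
rewrite overlap_sumr mulr_sumr; apply: ler_sum => l _.
rewrite overlap_proj !mxtrace_proj; exact: cauchy_schwarz.
Qed.

End Overlap.


Section TwoQubits.
Variable C : numClosedFieldType.

Lemma kron2E (A B : 'M[C]_2) a b a' b' :
  kron2 A B (idx2 a b) (idx2 a' b') = A a a' * B b b'.
Proof.
rewrite mxE; have [-> ->] := bitn_idx2 a b; have [-> ->] := bitn_idx2 a' b'.
by rewrite !inord_val.
Qed.

Lemma tensE (r1 r2 : 'M[C]_4) a b c d a' b' c' d' :
  tens r1 r2 (idx4 a b c d) (idx4 a' b' c' d') =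
  r1 (idx2 a b) (idx2 a' b') * r2 (idx2 c d) (idx2 c' d').
Proof.
by rewrite mxE; have [-> -> _ _] := sub2_idx4 a b c d; have [-> -> _ _] := sub2_idx4 a' b' c' d'.
Qed.

Lemma onAE (P : 'M[C]_4) a b c d a' b' c' d' :
  onA P (idx4 a b c d) (idx4 a' b' c' d') =
  P (idx2 a c) (idx2 a' c') * ((b == b' :> nat) && (d == d' :> nat))%:R.
Proof.
rewrite mxE; have [_ _ -> _] := sub2_idx4 a b c d; have [_ _ -> _] := sub2_idx4 a' b' c' d'.
by have [_ -> _ ->] := bitn_idx4 a b c d; have [_ -> _ ->] := bitn_idx4 a' b' c' d'.
Qed.

Lemma onBE (P : 'M[C]_4) a b c d a' b' c' d' :
  onB P (idx4 a b c d) (idx4 a' b' c' d') =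
  P (idx2 b d) (idx2 b' d') * ((a == a' :> nat) && (c == c' :> nat))%:R.
Proof.
rewrite mxE; have [_ _ _ ->] := sub2_idx4 a b c d; have [_ _ _ ->] := sub2_idx4 a' b' c' d'.
by have [-> _ -> _] := bitn_idx4 a b c d; have [-> _ -> _] := bitn_idx4 a' b' c' d'.
Qed.

Lemma phiplusE a b : phiplus C (idx2 a b) 0 = (a == b :> nat)%:R / sqrtC 2.
Proof. by rewrite mxE; have [-> ->] := bitn_idx2 a b; case: eqP; rewrite ?mul1r ?mul0r. Qed.

Lemma Bell00E a b : Bell C false false (idx2 a b) 0 = (a == b :> nat)%:R / sqrtC 2.
Proof.
rewrite /Bell !expr0 mulmx1 mxE sum_idx2.
by elim/ord2P: a; elim/ord2P: b; rewrite !sum_ord2 !kron2E !phiplusE !mxE /=; ring.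
Qed.

Lemma Bell11E a b : Bell C true true (idx2 a b) 0 =
  (((a : nat) == 0) && ((b : nat) == 1) : nat)%:R / sqrtC 2
  - (((a : nat) == 1) && ((b : nat) == 0) : nat)%:R / sqrtC 2.
Proof.
rewrite /Bell !expr1 mxE sum_idx2.
by elim/ord2P: a; elim/ord2P: b; rewrite !sum_ord2 !kron2E !phiplusE !mxE !sum_ord2 !mxE /=; ring.
Qed.

Definition Phi : 'M[C]_4 := proj (Bell C false false).

Lemma sqrtC2_conj : (sqrtC 2 : C)^* = sqrtC 2.
Proof. exact: sqrtC_conj (ler0n _ 2). Qed.

Lemma sqrtC2_neq0 : sqrtC 2 != 0 :> C.
Proof. by rewrite sqrtC_eq0 pnatr_eq0. Qed.

Lemma PhiE a b a' b' :
  Phi (idx2 a b) (idx2 a' b') = ((a == b :> nat) && (a' == b' :> nat))%:R / 2.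
Proof.
rewrite projE !Bell00E rmorphM rmorphV ?unitfE ?sqrtC2_neq0 //= sqrtC2_conj conjC_nat.
rewrite -[2 in RHS](sqrtCK 2) expr2.
elim/ord2P: a; elim/ord2P: b; elim/ord2P: a'; elim/ord2P: b'; rewrite /=.
all: by field; exact: sqrtC2_neq0.
Qed.

Definition ptrace (A : 'M[C]_4) : 'M[C]_2 :=
  \matrix_(a, a') \sum_b A (idx2 a b) (idx2 a' b).

Lemma onA_mulmxE (P : 'M[C]_4) (T : 'M[C]_16) a b c d y :
  (onA P *m T) (idx4 a b c d) y =
  \sum_a' \sum_c' P (idx2 a c) (idx2 a' c') * T (idx4 a' b c' d) y.
Proof.
rewrite mxE sum_idx4.
under eq_bigr => ? _ do under eq_bigr => ? _ do under eq_bigr => ? _ do under eq_bigr => ? _ do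
  rewrite onAE.
by rewrite !sum_ord2; elim/ord2P: b; elim/ord2P: d; rewrite /=; ring.
Qed.

Lemma onB_mulmxE (P : 'M[C]_4) (T : 'M[C]_16) a b c d y :
  (onB P *m T) (idx4 a b c d) y =
  \sum_b' \sum_d' P (idx2 b d) (idx2 b' d') * T (idx4 a b' c d') y.
Proof.
rewrite mxE sum_idx4.
under eq_bigr => ? _ do under eq_bigr => ? _ do under eq_bigr => ? _ do under eq_bigr => ? _ do
  rewrite onBE.
by rewrite !sum_ord2; elim/ord2P: a; elim/ord2P: c; rewrite /=; ring.
Qed.

Lemma sum_Phi_mul a c (f : 'I_2 -> 'I_2 -> C) :
  \sum_a' \sum_c' Phi (idx2 a c) (idx2 a' c') * f a' c' =
  (a == c :> nat)%:R / 2 * \sum_a' f a' a'.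
Proof. by rewrite !sum_ord2 !PhiE /= ?andbT ?andbF /=; ring. Qed.

Lemma pswap_tens (r1 r2 : 'M[C]_4) :
  pswap false false (tens r1 r2) = overlap (ptrace r1) (ptrace r2) / 2.
Proof.
rewrite /pswap -/Phi /mxtrace sum_idx4.
under eq_bigr => ? _ do under eq_bigr => ? _ do under eq_bigr => ? _ do under eq_bigr => ? _ do
  rewrite onA_mulmxE sum_Phi_mul.
rewrite overlapE !sum_ord2 /= !tensE !mxE !sum_ord2.
by field.
Qed.

Lemma swap_numerator_tens (r1 r2 : 'M[C]_4) :
  \tr (onB Phi *m onA Phi *m tens r1 r2) = overlap r1 r2 / 4.
Proof.
rewrite -mulmxA /mxtrace sum_idx4.
under eq_bigr => ? _ do under eq_bigr => ? _ do under eq_bigr => ? _ do under eq_bigr => ? _ do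
  rewrite onB_mulmxE sum_Phi_mul.
under eq_bigr => ? _ do under eq_bigr => ? _ do under eq_bigr => ? _ do under eq_bigr => ? _ do
  under eq_bigr => ? _ do rewrite onA_mulmxE sum_Phi_mul.
rewrite overlapE !sum_idx2 !sum_ord2 !sum_idx2 !sum_ord2 /= !tensE.
by field.
Qed.

Fact ptrace_is_semilinear : semilinear ptrace.
Proof.
split=> [a A | A B]; apply/matrixP => i j; rewrite !mxE ?mulr_sumr -?big_split;
  by apply: eq_bigr => k _; rewrite !mxE.
Qed.

HB.instance Definition _ :=
  GRing.isSemilinear.Build C 'M[C]_4 'M[C]_2 _ ptrace ptrace_is_semilinear.

Lemma mxtrace_ptrace (A : 'M[C]_4) : \tr (ptrace A) = \tr A.
Proof. by rewrite [in RHS]/mxtrace sum_idx2; apply: eq_bigr => a _; rewrite mxE. Qed.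

Lemma ptrace_Phi : ptrace Phi = 2^-1 *: 1%:M.
Proof.
apply/matrixP => a a'; rewrite !mxE sum_ord2 !PhiE.
by elim/ord2P: a; elim/ord2P: a'; rewrite /= ?mulr1n ?mulr0n; field.
Qed.

Lemma overlap_Phi (A : 'M[C]_4) :
  overlap Phi A = (dag (Bell C false false) *m A *m Bell C false false) 0 0.
Proof.
rewrite overlapE qformE !sum_idx2 !sum_ord2 !sum_idx2 !sum_ord2 !PhiE !Bell00E.
rewrite !rmorphM rmorphV ?unitfE ?sqrtC2_neq0 //= sqrtC2_conj !conjC_nat /=.
rewrite -[2 in LHS](sqrtCK 2) expr2.
by field; exact: sqrtC2_neq0.
Qed.

Lemma overlap_Phi_Phi : overlap Phi Phi = 1.
Proof. by rewrite overlapE !sum_idx2 !sum_ord2 !sum_idx2 !sum_ord2 !PhiE /=; field. Qed.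

Definition reshape (u : 'cV[C]_4) : 'M[C]_2 := \matrix_(a, b) u (idx2 a b) 0.

Lemma sum_mul_reshape (u v : 'cV[C]_4) :
  \sum_i u i 0 * v i 0 = \tr ((reshape u)^T *m reshape v).
Proof.
rewrite sum_idx2 mxtrace_mulmxE exchange_big.
by do 2![apply: eq_bigr => ? _]; rewrite !mxE.
Qed.

Lemma overlap_ptrace_proj (u v : 'cV[C]_4) :
  overlap (ptrace (proj u)) (ptrace (proj v)) =
  \sum_b \sum_d `|((reshape u)^T *m reshape v) b d| ^+ 2.
Proof.
rewrite overlapE !sum_ord2 !mxE !sum_ord2 !projE !mxE !normCK.
by rewrite !rmorphD !rmorphM /=; ring.
Qed.

Lemma overlap_le_ptrace (A B : 'M[C]_4) :
  psdmx A -> psdmx B -> overlap A B <= 2 * overlap (ptrace A) (ptrace B).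
Proof.
move=> /psdmx_sum_proj[W ->] /psdmx_sum_proj[Z ->].
rewrite !raddf_sum /= overlap_suml overlap_suml mulr_sumr; apply: ler_sum => k _.
rewrite !overlap_sumr mulr_sumr; apply: ler_sum => l _.
rewrite overlap_proj overlap_ptrace_proj sum_mul_reshape; exact: mxtrace_sqr_le.
Qed.

End TwoQubits.

Section EntanglementSwapping.
Variable C : numClosedFieldType.
Local Notation Phi := (Phi C).

(* No positivity hypothesis is needed: when the reduced overlap is 0 both sides
   are 0, as x / 0 = 0. *)
Lemma Fswap_tens (r1 r2 : 'M[C]_4) :
  Fswap false false (tens r1 r2) =
  overlap r1 r2 / (2 * overlap (ptrace r1) (ptrace r2)).
Proof.
rewrite /Fswap pswap_tens -/Phi swap_numerator_tens.
have [->|d_neq0] := eqVneq (overlap (ptrace r1) (ptrace r2)) 0.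
  by rewrite !(mul0r, mulr0, invr0).
by field; rewrite d_neq0.
Qed.

Lemma fidelity_mix p (s : 'M[C]_4) :
  (dag (Bell C false false) *m (p *: Phi + (1 - p) *: s) *m Bell C false false) 0 0 =
  p + (1 - p) * overlap Phi s.
Proof. by rewrite -overlap_Phi overlapDr !overlapZr overlap_Phi_Phi mulr1. Qed.

Lemma overlap_mix p (s1 s2 : 'M[C]_4) :
  overlap (p *: Phi + (1 - p) *: s1) (p *: Phi + (1 - p) *: s2) =
  p ^+ 2 + p * (1 - p) * (overlap Phi s1 + overlap Phi s2) + (1 - p) ^+ 2 * overlap s1 s2.
Proof.
rewrite overlapDl !overlapDr !overlapZl !overlapZr overlap_Phi_Phi [overlap s1 Phi]overlapC.
by ring.
Qed.

Lemma overlap_ptrace_mix p (s1 s2 : 'M[C]_4) :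
  overlap (ptrace (p *: Phi + (1 - p) *: s1)) (ptrace (p *: Phi + (1 - p) *: s2)) =
  p ^+ 2 / 2 + p * (1 - p) * (\tr s1 + \tr s2) / 2
  + (1 - p) ^+ 2 * overlap (ptrace s1) (ptrace s2).
Proof.
rewrite !linearD !linearZ /= ptrace_Phi overlapDl !overlapDr !overlapZl !overlapZr.
rewrite [overlap (ptrace s1) 1%:M]overlapC !overlap1mx mxtrace1 !mxtrace_ptrace.
by field.
Qed.

End EntanglementSwapping.

Section Optimality.
Variable C : numClosedFieldType.
Local Notation Phi := (Phi C).

Lemma swap_fidelity_le (p F n d : C) :
  0 <= p <= F -> F <= 1 -> n <= 1 -> n <= 2 * d ->
  0 < p ^+ 2 / 2 + p * (1 - p) + (1 - p) ^+ 2 * d ->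
  (p ^+ 2 + 2 * p * (F - p) + (1 - p) ^+ 2 * n) /
    (2 * (p ^+ 2 / 2 + p * (1 - p) + (1 - p) ^+ 2 * d)) <= 1 - 2 * p * (1 - F).
Proof.
move=> /andP[p_ge0 p_le_F] F_le1 n_le1 n_le_2d D_gt0.
have F_ge0 : 0 <= F := le_trans p_ge0 p_le_F.
have p_le1 : p <= 1 := le_trans p_le_F F_le1.
set f := 1 - 2 * p * (1 - F).
have f_ge0 : 0 <= f.
  rewrite (_ : f = 2 * (F - p) * (1 - F) + (1 - F) ^+ 2 + F ^+ 2); last by rewrite /f; ring.
  by rewrite !addr_ge0 ?exprn_ge0 ?mulr_ge0 ?subr_ge0.
have f_le1 : f <= 1 by rewrite /f lerBlDr lerDl !mulr_ge0 ?subr_ge0.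
rewrite ler_pdivrMr ?mulr_gt0 // -subr_ge0.
have -> : f * (2 * (p ^+ 2 / 2 + p * (1 - p) + (1 - p) ^+ 2 * d))
          - (p ^+ 2 + 2 * p * (F - p) + (1 - p) ^+ 2 * n)
        = (1 - p) ^+ 2 * ((1 - f) * (1 - n) + f * (2 * d - n)).
  by rewrite /f; field.
apply: mulr_ge0; first by rewrite exprn_ge0 // subr_ge0.
by rewrite addr_ge0 // mulr_ge0 // subr_ge0.
Qed.

Lemma Fswap_tens_le (p F : C) (r1 r2 : 'M[C]_4) :
  0 <= p <= F -> F <= 1 -> S_pF p F r1 -> S_pF p F r2 ->
  0 < pswap false false (tens r1 r2) ->
  Fswap false false (tens r1 r2) <= 1 - 2 * p * (1 - F).
Proof.
move=> pF F_le1 [_ [[s1 [dens1 ->]] fid1]] [_ [[s2 [dens2 ->]] fid2]].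
have [_ [_ tr1]] := dens1; have [_ [_ tr2]] := dens2.
have e1 : (1 - p) * overlap Phi s1 = F - p by rewrite -fid1 fidelity_mix; ring.
have e2 : (1 - p) * overlap Phi s2 = F - p by rewrite -fid2 fidelity_mix; ring.
rewrite -/Phi pswap_tens Fswap_tens overlap_mix overlap_ptrace_mix tr1 tr2.
rewrite (_ : p * (1 - p) * (overlap Phi s1 + overlap Phi s2) = 2 * p * (F - p)); last first.
  transitivity (p * ((1 - p) * overlap Phi s1) + p * ((1 - p) * overlap Phi s2)); first by ring.
  by rewrite e1 e2; ring.
rewrite (_ : p * (1 - p) * (1 + 1) / 2 = p * (1 - p)); last by field.
rewrite pmulr_lgt0 ?invr_gt0 ?ltr0n // => D_gt0.
apply: swap_fidelity_le => //.
  have := overlap_le_mxtrace (density_psdmx dens1) (density_psdmx dens2).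
  by rewrite tr1 tr2 mulr1.
exact: overlap_le_ptrace (density_psdmx dens1) (density_psdmx dens2).
Qed.

Lemma mxtrace_Phi : \tr Phi = 1.
Proof. by rewrite /mxtrace sum_idx2 !sum_ord2 !PhiE /=; field. Qed.

Lemma Bell_superposition_spec (x y : C) (v : 'cV[C]_4) :
  v = x *: Bell C false false + y *: Bell C true true ->
  x^* = x -> y^* = y -> x ^+ 2 + y ^+ 2 = 1 ->
  [/\ \tr (proj v) = 1, overlap Phi (proj v) = x ^+ 2,
      overlap (proj v) (proj v) = 1 & ptrace (proj v) = 2^-1 *: 1%:M].
Proof.
move=> ->{v} x_real y_real xy1.
set v := _ + _; set al := x / sqrtC 2; set be := y / sqrtC 2.
have [v00 v01 v10 v11] : [/\ v (idx2 o0 o0) 0 = al, v (idx2 o0 o1) 0 = be,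
                             v (idx2 o1 o0) 0 = - be & v (idx2 o1 o1) 0 = al].
  by split; rewrite combmxE Bell00E Bell11E /= /al /be; ring.
have real_div_sqrt2 (z : C) : z^* = z -> (z / sqrtC 2)^* = z / sqrtC 2.
  by move=> z_real; rewrite rmorphM rmorphV ?unitfE ?sqrtC2_neq0 //= z_real sqrtC2_conj.
have al_real : al^* = al := real_div_sqrt2 x x_real.
have be_real : be^* = be := real_div_sqrt2 y y_real.
have albe : al ^+ 2 + be ^+ 2 = 2^-1.
  by rewrite !expr_div_n sqrtCK -mulrDl xy1 mul1r.
have al2 : 2 * al ^+ 2 = x ^+ 2.
  by rewrite expr_div_n sqrtCK mulrC mulfVK ?pnatr_eq0.
clearbody al be.
split.
- rewrite mxtrace_proj sum_idx2 !sum_ord2 v00 v01 v10 v11 !normCK rmorphN /= al_real be_real.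
  by transitivity (2 * (al ^+ 2 + be ^+ 2)); [ring | rewrite albe mulfV ?pnatr_eq0].
- rewrite overlapE !sum_idx2 !sum_ord2 !sum_idx2 !sum_ord2 !PhiE !projE /=.
  rewrite v00 v01 v10 v11 rmorphN /= al_real be_real.
  by rewrite -al2; field.
- rewrite overlap_proj sum_idx2 !sum_ord2 v00 v01 v10 v11.
  transitivity (`|2 * (al ^+ 2 + be ^+ 2)| ^+ 2); first by congr (`|_| ^+ 2); ring.
  by rewrite albe mulfV ?pnatr_eq0 // normr1 expr1n.
- apply/matrixP => a a'; rewrite !mxE !sum_ord2 !projE.
  elim/ord2P: a; elim/ord2P: a'; rewrite /= ?v00 ?v01 ?v10 ?v11 ?rmorphN /= al_real be_real.
  all: by rewrite -albe; field.
Qed.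

Lemma Ftilde_bounds (p F : C) : 0 <= p <= F -> F <= 1 ->
  [/\ 0 <= (F - p) / (1 - p), 0 <= 1 - (F - p) / (1 - p)
     & (1 - p) * ((F - p) / (1 - p)) = F - p].
Proof.
move=> /andP[p_ge0 p_le_F] F_le1.
have [p1|p_neq1] := eqVneq p 1.
  have F1 : F = 1 by apply/eqP; rewrite eq_le F_le1 -p1 p_le_F.
  by rewrite p1 F1 subrr invr0 !mulr0 subr0 lexx ler01.
have p_le1 : p <= 1 := le_trans p_le_F F_le1.
have q_neq0 : 1 - p != 0 by rewrite subr_eq0 eq_sym.
split.
- by rewrite divr_ge0 ?subr_ge0.
- rewrite (_ : 1 - _ = (1 - F) / (1 - p)); last by field.
  by rewrite divr_ge0 ?subr_ge0.
- by rewrite mulrC divfK.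
Qed.

Lemma rho_opt_spec (p F : C) : 0 <= p <= F -> F <= 1 ->
  [/\ S_pF p F (rho_opt p F),
      pswap false false (tens (rho_opt p F) (rho_opt p F)) = 4^-1 &
      Fswap false false (tens (rho_opt p F) (rho_opt p F)) = 1 - 2 * p * (1 - F)].
Proof.
move=> pF F_le1; have /andP[p_ge0 p_le_F] := pF.
have [t_ge0 t_le1 tE] := Ftilde_bounds pF F_le1.
set t := (F - p) / (1 - p) in t_ge0 t_le1 tE.
have norm1 : sqrtC t ^+ 2 + sqrtC (1 - t) ^+ 2 = 1 by rewrite !sqrtCK addrC subrK.
have [tr_psi fid_psi ov_psi pt_psi] :=
  Bell_superposition_spec (v := psi_opt p F) erefl (sqrtC_conj t_ge0) (sqrtC_conj t_le1) norm1.
rewrite sqrtCK -/t in fid_psi; clearbody t.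
have FE : F = p + (1 - p) * t by rewrite tE addrC subrK.
have -> : rho_opt p F = p *: Phi + (1 - p) *: proj (psi_opt p F) by [].
have D_opt : overlap (ptrace (p *: Phi + (1 - p) *: proj (psi_opt p F)))
                     (ptrace (p *: Phi + (1 - p) *: proj (psi_opt p F))) = 2^-1.
  rewrite overlap_ptrace_mix tr_psi pt_psi overlapZl overlapZr overlap1mx mxtrace1.
  by field.
split.
- have dens_psi := density_proj tr_psi.
  have p_le1 : p <= 1 := le_trans p_le_F F_le1.
  have dens_Phi : density Phi := density_proj mxtrace_Phi.
  split; first by apply: density_mix; rewrite ?p_ge0 ?p_le1.
  split; first by exists (proj (psi_opt p F)).
  by rewrite fidelity_mix fid_psi [in RHS]FE.
- by rewrite pswap_tens D_opt; field.
- rewrite Fswap_tens D_opt overlap_mix ov_psi fid_psi mulrV ?unitfE ?pnatr_eq0 // divr1.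
  by rewrite [in RHS]FE; ring.
Qed.

End Optimality.

Theorem theorem3 (C : numClosedFieldType) (p F : C) :
  0 <= F <= 1 -> 0 <= p <= F ->
  is_Fmax p F (1 - 2 * p * (1 - F)) /\
  (p < 1 ->
     S_pF p F (rho_opt p F) /\
     0 < pswap false false (tens (rho_opt p F) (rho_opt p F)) /\
     Fswap false false (tens (rho_opt p F) (rho_opt p F)) = 1 - 2 * p * (1 - F)).
Proof.
move=> /andP[_ F_le1] pF.
have [S_opt pswap_opt Fswap_opt] := rho_opt_spec pF F_le1.
have pswap_gt0 : 0 < pswap false false (tens (rho_opt p F) (rho_opt p F)).
  by rewrite pswap_opt invr_gt0 ltr0n.
split=> [|_]; last by [].
split; first by exists (rho_opt p F), (rho_opt p F).
by move=> r1 r2 S1 S2; apply: Fswap_tens_le.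
Qed.
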